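(* Let $P$ and $Q$ be real polynomials. Then $P^2\preceq P$ holds if and only if $0\preceq P\preceq1$. Furthermore, if $P^2\preceq P$ and $0\preceq Q\preceq P$, then $Q^2\preceq Q$.
   Context: For real polynomials $P,Q$ (in finitely many variables), $P\preceq Q$ means $Q=P+\sum_{i=1}^m R_i^2$ for some polynomials $R_1,\dots,R_m$; $0\preceq P$ means $P$ is a sum of squares and $P\preceq1$ means $1-P$ is a sum of squares. *)

From HB Require Import structures.
From mathcomp Require Import all_boot all_order all_algebra.
From mathcomp Require Import reals.
From mathcomp Require Import mpoly.
Set Implicit Arguments. Unset Strict Implicit. Unset Printing Implicit Defensive.
Import Order.TTheory GRing.Theory Num.Theory.
Local Open Scope ring_scope.

Definition sos_le (R : realType) (n : nat) (P Q : {mpoly R[n]}) : Prop :=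
  exists s : seq {mpoly R[n]}, Q = P + \sum_(r <- s) r ^+ 2.

(* In any commutative ring, sums of squares are closed under sums and products.
   Then p - p^2 = p (1 - p) and conversely p = p^2 + (p - p^2),
   1 - p = (1 - p)^2 + (p - p^2); and q - q^2 = q ((1 - p) + (p - q)). *)
From HB Require Import structures.
From mathcomp Require Import all_boot all_order all_algebra.
From mathcomp Require Import reals.
From mathcomp Require Import mpoly.
Set Implicit Arguments. Unset Strict Implicit. Unset Printing Implicit Defensive.
Import GRing.Theory.
Local Open Scope ring_scope.

Section SumsOfSquares.
Variable R : comPzRingType.
Implicit Types p q x y : R.

Definition sos x := exists s : seq R, x = \sum_(r <- s) r ^+ 2.

Lemma sosD x y : sos x -> sos y -> sos (x + y).
Proof. by move=> [s ->] [t ->]; exists (s ++ t); rewrite big_cat. Qed.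

Lemma sos_sqr x : sos (x ^+ 2).
Proof. by exists [:: x]; rewrite big_seq1. Qed.

Lemma sosM x y : sos x -> sos y -> sos (x * y).
Proof.
move=> [s ->] [t ->]; exists [seq a * b | a <- s, b <- t].
rewrite big_allpairs_dep mulr_suml; apply: eq_bigr => a _.
by rewrite mulr_sumr; apply: eq_bigr => b _; rewrite exprMn.
Qed.

Lemma sos_subr_sqr p : sos (p - p ^+ 2) <-> sos p /\ sos (1 - p).
Proof.
split=> [sos_p_p2 | [sos_p sos_1p]].
  split.
    by rewrite -(subrK (p ^+ 2) p) addrC; apply: sosD (sos_sqr _) sos_p_p2.
  have -> : 1 - p = (1 - p) ^+ 2 + (p - p ^+ 2)
    by rewrite expr2 mulrBl mul1r mulrBr mulr1 subrK.
  exact: sosD (sos_sqr _) sos_p_p2.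
by rewrite expr2 -{1}(mulr1 p) -mulrBr; apply: sosM.
Qed.

Lemma sos_subr_sqr_le p q :
  sos (p - p ^+ 2) -> sos q -> sos (p - q) -> sos (q - q ^+ 2).
Proof.
move=> /sos_subr_sqr[_ sos_1p] sos_q sos_pq.
have -> : q - q ^+ 2 = q * ((1 - p) + (p - q))
  by rewrite addrA subrK mulrBr mulr1 expr2.
exact: sosM sos_q (sosD sos_1p sos_pq).
Qed.

End SumsOfSquares.

Lemma sos_leE (R : realType) (n : nat) (P Q : {mpoly R[n]}) :
  sos_le P Q <-> sos (Q - P).
Proof.
split=> -[s def_s]; exists s; first by rewrite def_s addrC addKr.
by rewrite -def_s addrC subrK.
Qed.

Theorem lemmaA1 (R : realType) (n : nat) (P Q : {mpoly R[n]}) :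
  (sos_le (P ^+ 2) P <-> (sos_le 0 P /\ sos_le P 1)) /\
  (sos_le (P ^+ 2) P -> sos_le 0 Q -> sos_le Q P -> sos_le (Q ^+ 2) Q).
Proof.
rewrite !sos_leE !subr0; split; first exact: sos_subr_sqr.
exact: sos_subr_sqr_le.
Qed.
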